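(* Let $d \geq 0$ be an integer, $G$ a graph, and $\mathcal{Z}$ a family of $d$-clusters in $G$. Then there exists a family $\mathcal{Z}'$ of pairwise disjoint $(2d)$-clusters in $G$ such that $|\mathcal{Z}'| \leq |\mathcal{Z}|$ and $\bigcup \mathcal{Z} = \bigcup \mathcal{Z}'$.
   Context: For an integer $d\ge 0$, a $d$-cluster in a graph $G$ is a nonempty set $A \subseteq V(G)$ such that $G[A]$ is connected and has diameter at most $d$. *)

From mathcomp Require Import all_boot.
Set Implicit Arguments. Unset Strict Implicit. Unset Printing Implicit Defensive.

Definition simple_graph (T : finType) (e : rel T) : Prop :=
  symmetric e /\ irreflexive e.

Definition induced_rel (T : finType) (e : rel T) (A : {set T}) : rel T :=
  fun x y => [&& x \in A, y \in A & e x y].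

Definition induced_connected (T : finType) (e : rel T) (A : {set T}) : Prop :=
  forall x y, x \in A -> y \in A -> connect (induced_rel e A) x y.

(* dist_{G[A]}(x,y) <= k: there is a walk x = v0, v1, ..., vm = y in G[A]
   with m <= k edges (the walk is x :: p). *)
Definition induced_dist_le (T : finType) (e : rel T) (A : {set T})
    (x y : T) (k : nat) : Prop :=
  exists p : seq T, [/\ path (induced_rel e A) x p, last x p = y & size p <= k].

Definition induced_diam_le (T : finType) (e : rel T) (A : {set T}) (k : nat) : Prop :=
  forall x y, x \in A -> y \in A -> induced_dist_le e A x y k.

Definition cluster (T : finType) (e : rel T) (k : nat) (A : {set T}) : Prop :=
  [/\ A != set0, induced_connected e A & induced_diam_le e A k].

Definition pairwise_disjoint (T : finType) (F : {set {set T}}) : Prop :=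
  forall A B, A \in F -> B \in F -> A != B -> [disjoint A & B].

(* Choose a centre in every cluster of Z and let U be their union; every vertex
   of U is then within distance d, in G[U], of some centre. Send each vertex of
   U to its nearest centre, breaking ties by a fixed ordering of the vertices.
   If v is sent to c, every vertex on a shortest c-v walk in G[U] is sent to c
   as well, so the walk stays inside the cell of c: each cell is connected and
   has radius at most d around its centre, hence diameter at most 2d. The cells
   are disjoint, cover U, and there is at most one per cluster of Z. *)
From mathcomp Require Import all_boot.
Set Implicit Arguments. Unset Strict Implicit. Unset Printing Implicit Defensive.

Section Walks.
Variables (T : finType) (r : rel T).

Fixpoint dist_leb (x y : T) (k : nat) : bool :=
  if k is k'.+1 then (x == y) || [exists z, r x z && dist_leb z y k'] else x == y.

Lemma dist_lebP x y k :
  reflect (exists p, [/\ path r x p, last x p = y & size p <= k]) (dist_leb x y k).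
Proof.
elim: k x => [|k IHk] x /=.
  by apply: (iffP eqP) => [<-|[[|z p] [] //= _ <-]]; first exists [::].
apply: (iffP orP) => [[/eqP<- | /existsP[z /andP[xz /IHk[p [zp lp sp]]]]] | [[|z p] []]].
- by exists [::].
- by exists (z :: p); rewrite /= xz zp.
- by move=> _ <-; left.
- move=> /= /andP[xz zp] lz sp; right; apply/existsP; exists z; rewrite xz.
  by apply/IHk; exists p.
Qed.

Lemma dist_leb_refl x k : dist_leb x x k.
Proof. by case: k => [|k] /=; rewrite eqxx. Qed.

Lemma dist_leb_step x y : r x y -> dist_leb x y 1.
Proof. by move=> xy; apply/dist_lebP; exists [:: y]; rewrite /= xy. Qed.

Lemma dist_leb_mono x y m n : m <= n -> dist_leb x y m -> dist_leb x y n.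
Proof.
by move=> mn /dist_lebP[p [xp lp sp]]; apply/dist_lebP; exists p; rewrite (leq_trans sp).
Qed.

Lemma dist_leb_trans x y z m n :
  dist_leb x y m -> dist_leb y z n -> dist_leb x z (m + n).
Proof.
move=> /dist_lebP[p [xp <- sp]] /dist_lebP[q [yq <- sq]]; apply/dist_lebP.
by exists (p ++ q); rewrite cat_path last_cat xp yq size_cat leq_add.
Qed.

Lemma dist_leb_sym (r_sym : symmetric r) x y k : dist_leb x y k = dist_leb y x k.
Proof.
suff dist_leb_rev u v : dist_leb u v k -> dist_leb v u k.
  by apply/idP/idP; apply: dist_leb_rev.
case/dist_lebP=> p [up <- sp]; apply/dist_lebP; exists (rev (belast u p)).
rewrite size_rev size_belast rev_path; split=> //.
  by rewrite (eq_path (e' := r)) // => a b; rewrite r_sym.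
by rewrite -(last_cons u) -rev_rcons -lastI rev_cons last_rcons.
Qed.

Lemma dist_leb_connect x y k : dist_leb x y k -> connect r x y.
Proof. by case/dist_lebP=> p [xp lp _]; apply/connectP; exists p. Qed.

End Walks.

Lemma dist_lebS (T : finType) (r r' : rel T) x y k :
  subrel r r' -> dist_leb r x y k -> dist_leb r' x y k.
Proof.
move=> rr' /dist_lebP[p [xp lp sp]]; apply/dist_lebP.
by exists p; split=> //; apply: sub_path xp.
Qed.

Section InducedSubgraphs.
Variables (T : finType) (e : rel T).

Lemma induced_relS (A B : {set T}) :
  A \subset B -> subrel (induced_rel e A) (induced_rel e B).
Proof.
by move=> /subsetP AB x y /and3P[xA yA exy]; rewrite /induced_rel !AB.
Qed.

Lemma induced_rel_sym (A : {set T}) : symmetric e -> symmetric (induced_rel e A).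
Proof. by move=> e_sym x y; rewrite /induced_rel e_sym andbCA. Qed.

Lemma dist_leb_induced_mem (A : {set T}) x y k :
  dist_leb (induced_rel e A) x y k -> y \in A -> x \in A.
Proof.
case: k => [|k] /=; first by move=> /eqP->.
by case/orP=> [/eqP-> // | /existsP[z /andP[/and3P[]]]].
Qed.

Lemma cluster_of_radius (A : {set T}) c k :
  symmetric e -> c \in A ->
  (forall v, v \in A -> dist_leb (induced_rel e A) c v k) ->
  cluster e (2 * k) A.
Proof.
move=> e_sym cA radius.
have diam x y : x \in A -> y \in A -> dist_leb (induced_rel e A) x y (2 * k).
  move=> xA yA; rewrite mul2n -addnn.
  apply: (@dist_leb_trans _ _ _ c); last exact: radius.
  by rewrite dist_leb_sym ?radius //; apply: induced_rel_sym.
split.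
- by apply/set0Pn; exists c.
- by move=> x y xA yA; apply: dist_leb_connect (diam x y xA yA).
- by move=> x y xA yA; apply/dist_lebP; apply: diam.
Qed.

End InducedSubgraphs.

Lemma exists_transversal (T : finType) (Z : {set {set T}}) :
  (forall A, A \in Z -> A != set0) ->
  exists C : {set T}, [/\ #|C| <= #|Z|, C \subset \bigcup_(A in Z) A
                        & forall A, A \in Z -> exists2 c, c \in C & c \in A].
Proof.
move=> Z_nonempty; case: (pickP (@predT T)) => [x0 _ | T0]; last first.
  exists set0; split; rewrite ?cards0 ?sub0set //.
  by move=> A /Z_nonempty/set0Pn[x]; have := T0 x.
pose pick_in (A : {set T}) := odflt x0 [pick x in A].
have pick_inP A : A \in Z -> pick_in A \in A.
  move=> /Z_nonempty/set0Pn[y yA]; rewrite /pick_in.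
  by case: pickP => [x // | noA]; rewrite noA in yA.
exists (pick_in @: Z); split.
- exact: leq_imset_card.
- apply/subsetP=> _ /imsetP[A AZ ->]; apply/bigcupP; exists A => //; exact: pick_inP.
- by move=> A AZ; exists (pick_in A); [apply: imset_f | apply: pick_inP].
Qed.

Section VoronoiCells.
Variables (T : finType) (e : rel T) (U C : {set T}) (d : nat).

Local Notation distU := (dist_leb (induced_rel e U)).

Definition near_center (v : T) (k : nat) : bool := [exists c in C, distU c v k].

Lemma near_center_or_cap v : exists k, near_center v k || (k == d).
Proof. by exists d; rewrite eqxx orbT. Qed.

(* The distance from C to v in G[U], capped at d. *)
Definition depth (v : T) : nat := ex_minn (near_center_or_cap v).

Lemma depth_min v k : near_center v k -> depth v <= k.
Proof. by move=> nvk; rewrite /depth; case: ex_minnP => m _; apply; rewrite nvk. Qed.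

Lemma depth_le v : depth v <= d.
Proof. by rewrite /depth; case: ex_minnP => m _; apply; rewrite eqxx orbT. Qed.

Definition voronoi_cell (c : T) : {set T} :=
  [set v in U | [&& c \in C, distU c v (depth v)
                 & [forall c' in C,
                      distU c' v (depth v) ==> (enum_rank c <= enum_rank c')]]].

Lemma voronoi_cell_uniq c c' v :
  v \in voronoi_cell c -> v \in voronoi_cell c' -> c = c'.
Proof.
rewrite !inE => /and4P[_ cC cv /forall_inP c_min].
case/and4P=> _ c'C c'v /forall_inP c'_min.
apply: enum_rank_inj; apply/val_inj/eqP.
by rewrite eqn_leq (implyP (c_min _ c'C)) ?(implyP (c'_min _ cC)).
Qed.

Hypothesis CU : C \subset U.
Hypothesis U_near : forall v, v \in U -> exists2 c, c \in C & distU c v d.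

Lemma near_center_depth v : v \in U -> near_center v (depth v).
Proof.
move=> vU; rewrite /depth; case: ex_minnP => m /orP[// | /eqP->] _.
by have [c cC cv] := U_near vU; apply/exists_inP; exists c.
Qed.

Lemma voronoi_cell_center c : c \in C -> c \in voronoi_cell c.
Proof.
move=> cC; have c_depth0 : depth c = 0.
  by apply/eqP; rewrite -leqn0 depth_min //; apply/exists_inP; exists c; rewrite /= ?eqxx.
rewrite inE (subsetP CU) //= c_depth0 cC /= eqxx.
by apply/forall_inP=> c' _; apply/implyP=> /eqP->.
Qed.

Lemma voronoi_cell_cover v : v \in U -> exists2 c, c \in C & v \in voronoi_cell c.
Proof.
move=> vU; have /exists_inP[c0 c0C c0v] := near_center_depth vU.
pose S := [pred c | (c \in C) && distU c v (depth v)].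
have c0S : S c0 by rewrite /S /= c0C.
case: (arg_minnP (fun c => val (enum_rank c)) c0S) => c /andP[cC cv] c_min.
exists c; rewrite // inE vU cC cv /=.
by apply/forall_inP=> c' c'C; apply/implyP=> c'v; apply: c_min; rewrite /S /= c'C.
Qed.

Lemma voronoi_cell_geodesic c u v j k :
  v \in voronoi_cell c -> distU c u j -> distU u v k -> j + k <= depth v ->
  u \in voronoi_cell c.
Proof.
rewrite inE => /and4P[vU cC _ /forall_inP c_min] cu uv jk.
have uU := dist_leb_induced_mem uv vU.
have depth_u : depth u = j.
  apply/eqP; rewrite eqn_leq depth_min /=; last by apply/exists_inP; exists c.
  have /exists_inP[c' c'C c'u] := near_center_depth uU.
  rewrite -(leq_add2r k) (leq_trans jk) // depth_min //.
  by apply/exists_inP; exists c'; rewrite ?(dist_leb_trans c'u uv).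
rewrite inE uU cC depth_u cu /=; apply/forall_inP=> c' c'C; apply/implyP=> c'u.
apply: (implyP (c_min c' c'C)); apply: dist_leb_mono jk _.
exact: dist_leb_trans c'u uv.
Qed.

Lemma voronoi_cell_radius c v :
  v \in voronoi_cell c -> dist_leb (induced_rel e (voronoi_cell c)) c v d.
Proof.
move=> vc; move: (vc); rewrite inE => /and4P[_ _ cv _].
suff walk_in_cell k u j : distU c u j -> distU u v k -> j + k <= depth v ->
    dist_leb (induced_rel e (voronoi_cell c)) u v k.
  exact: dist_leb_mono (depth_le v) (walk_in_cell _ c 0 (dist_leb_refl _ _ _) cv _).
elim: k u j => [|k IHk] u j cu /=; first by move=> /eqP->.
case/orP=> [-> // | /existsP[z /andP[uz zv]]] jk.
apply/orP; right; apply/existsP; exists z.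
have cz : distU c z j.+1 by rewrite -addn1 (dist_leb_trans cu (dist_leb_step uz)).
have jk' : j.+1 + k <= depth v by rewrite addSnnS.
have uc := voronoi_cell_geodesic vc cu (dist_leb_trans (dist_leb_step uz) zv) jk.
have zc := voronoi_cell_geodesic vc cz zv jk'.
move: uz => /and3P[_ _ euz].
by rewrite /induced_rel uc zc euz (IHk z j.+1).
Qed.

Hypothesis e_sym : symmetric e.

Lemma voronoi_cell_cluster c : c \in C -> cluster e (2 * d) (voronoi_cell c).
Proof.
move=> cC; apply: cluster_of_radius e_sym (voronoi_cell_center cC) _.
exact: voronoi_cell_radius.
Qed.

Lemma voronoi_cells_pairwise_disjoint : pairwise_disjoint (voronoi_cell @: C).
Proof.
move=> _ _ /imsetP[c _ ->] /imsetP[c' _ ->] cc'; apply/pred0P=> v /=.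
apply/negP=> /andP[vc vc']; move/negP: cc'; apply.
by rewrite (voronoi_cell_uniq vc vc').
Qed.

Lemma bigcup_voronoi_cells : \bigcup_(A in voronoi_cell @: C) A = U.
Proof.
apply/setP=> v; apply/bigcupP/idP=> [[_ /imsetP[c _ ->]] | vU].
  by rewrite inE => /andP[].
have [c cC vc] := voronoi_cell_cover vU.
by exists (voronoi_cell c); first exact: imset_f.
Qed.

End VoronoiCells.

Theorem lemma3p8 (T : finType) (e : rel T) (d : nat) (Z : {set {set T}}) :
  simple_graph e ->
  (forall A, A \in Z -> cluster e d A) ->
  exists Z' : {set {set T}},
    [/\ (forall A, A \in Z' -> cluster e (2 * d) A),
        pairwise_disjoint Z',
        #|Z'| <= #|Z|
      & \bigcup_(A in Z) A = \bigcup_(A in Z') A].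
Proof.
move=> [e_sym _] Z_clusters.
have Z_nonempty A : A \in Z -> A != set0 by case/Z_clusters.
have [C [CZ CU C_hits]] := exists_transversal Z_nonempty.
set U := \bigcup_(A in Z) A.
have U_near v : v \in U -> exists2 c, c \in C & dist_leb (induced_rel e U) c v d.
  case/bigcupP=> A AZ vA; have [c cC cA] := C_hits A AZ; exists c => //.
  have [_ _ diamA] := Z_clusters A AZ.
  by apply: dist_lebS (induced_relS (bigcup_sup A AZ)) _; apply/dist_lebP/diamA.
exists (voronoi_cell e U C d @: C); split.
- by move=> _ /imsetP[c cC ->]; apply: voronoi_cell_cluster.
- exact: voronoi_cells_pairwise_disjoint.
- exact: leq_trans (leq_imset_card _ _) CZ.
- by rewrite bigcup_voronoi_cells.
Qed.
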